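(* Let $q$ be a prime power, $n\ge 2$, $K=\mathbb{F}_{q^n}$, $d=\frac{q^n-1}{q-1}$. The function fields $E_{1,\mathrm{Kum}}=K(x,y)$ with $y^d=s_{n,1}(x)$ and $E_{n-1,\mathrm{Kum}}=K(x,y)$ with $y^d=s_{n,n-1}(x)$ are both isomorphic over $K$ to the trace-norm function field $E_n=K(x,y)$ with $y^{q^{n-1}}+\dots+y^q+y=x^{1+q+\dots+q^{n-1}}$.
   Context: For a prime power $q$ and integers $n\ge 1$, $0\le i\le n$, the $i$-th $(n,q)$-elementary symmetric polynomial is $s_{n,i}(t)=\sum_{0\le j_1<\dots<j_i\le n-1} t^{q^{j_1}+\dots+q^{j_i}}\in\mathbb{F}_p[t]$; $s_{n,1}$ is the trace $\sum_{j=0}^{n-1}t^{q^j}$. *)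

From HB Require Import structures.
From mathcomp Require Import all_boot all_algebra all_field.
Set Implicit Arguments. Unset Strict Implicit. Unset Printing Implicit Defensive.
Import GRing.Theory.
Local Open Scope ring_scope.

Definition sym_q (R : nzRingType) (q n i : nat) : {poly R} :=
  \sum_(S : {set 'I_n} | #|S| == i) 'X^(\sum_(j in S) q ^ j)%N.

(* Evaluation of a bivariate polynomial P(x,y) in {poly {poly K}} (outer variable y,
   coefficients in K[x]) at (x,y) in a field F containing K via phi. *)
Definition eval2 (K F : fieldType) (phi : {rmorphism K -> F})
    (P : {poly {poly K}}) (x y : F) : F :=
  (map_poly (fun c : {poly K} => (map_poly phi c).[x]) P).[y].

(* (F, phi, x, y) is a presentation of the function field K(x,y) with f(x,y)=0:
   x transcendental over K, f(x,y) = 0, and F = K(x,y) (generated by x,y). *)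
Definition is_function_field (K F : fieldType) (phi : {rmorphism K -> F})
    (f : {poly {poly K}}) (x y : F) : Prop :=
  [/\ (forall p : {poly K}, p != 0 -> (map_poly phi p).[x] != 0),
      eval2 phi f x y = 0 &
      (forall z : F, exists P Q : {poly {poly K}},
          eval2 phi Q x y != 0 /\ z = eval2 phi P x y / eval2 phi Q x y)].

Definition K_isomorphic (K F1 F2 : fieldType) (phi1 : {rmorphism K -> F1})
    (phi2 : {rmorphism K -> F2}) : Prop :=
  exists sigma : {rmorphism F1 -> F2},
    bijective sigma /\ forall c : K, sigma (phi1 c) = phi2 c.

Definition kummer_poly (K : fieldType) (q n i : nat) : {poly {poly K}} :=
  'X^((q ^ n - 1) %/ (q - 1)) - (sym_q K q n i)%:P.

Definition trace_norm_poly (K : fieldType) (q n : nat) : {poly {poly K}} :=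
  \sum_(j < n) 'X^(q ^ j) - ('X^(\sum_(j < n) q ^ j)%N)%:P.

(* Each of the three fields is K(t, z) for some t transcendental over K and
   some z with z^d = t u(t), where t u(t) = s_{n,1}(t) and u(0) = 1.  For the
   Kummer field with s_{n,1} take (t, z) = (x, y); for the one with s_{n,n-1}
   take (t, z) = (1/x, y/x), because s_{n,n-1}(x) / x^d = s_{n,1}(1/x); for the
   trace-norm field take (t, z) = (y, x), where y is transcendental since x is
   transcendental and x^d lies in K[y].  As Y^d - t u(t) is Eisenstein at t,
   the kernel of the evaluation K[t][Y] -> K(t, z) is the ideal it generates,
   so any two such fields are fraction fields of the same quotient ring and
   hence K-isomorphic. *)

From HB Require Import structures.
From mathcomp Require Import all_boot all_algebra all_field.
From mathcomp Require Import ring.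
Set Implicit Arguments. Unset Strict Implicit. Unset Printing Implicit Defensive.
Import GRing.Theory.
Local Open Scope ring_scope.

Definition in_frac (A : nzRingType) (F : fieldType) (E : A -> F) (z : F) : Prop :=
  exists P Q, E Q != 0 /\ z = E P / E Q.

Section FracClosure.

Variables (A : nzRingType) (F : fieldType) (E : {rmorphism A -> F}).

Lemma in_frac_rmorph a : in_frac E (E a).
Proof. by exists a, 1; rewrite rmorph1 divr1 oner_eq0. Qed.

Lemma in_fracD a b : in_frac E a -> in_frac E b -> in_frac E (a + b).
Proof.
move=> [P [Q [nzQ ->]]] [P' [Q' [nzQ' ->]]].
exists (P * Q' + P' * Q), (Q * Q'); rewrite rmorphM mulf_neq0 //.
by rewrite addf_div // rmorphD !rmorphM.
Qed.

Lemma in_fracM a b : in_frac E a -> in_frac E b -> in_frac E (a * b).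
Proof.
move=> [P [Q [nzQ ->]]] [P' [Q' [nzQ' ->]]].
by exists (P * P'), (Q * Q'); rewrite !rmorphM mulf_neq0 // mulf_div.
Qed.

Lemma in_frac_div a b : in_frac E a -> in_frac E b -> b != 0 -> in_frac E (a / b).
Proof.
move=> [P [Q [nzQ ->]]] [P' [Q' [nzQ' ->]]].
rewrite mulf_eq0 invr_eq0 negb_or => /andP[nzP' _].
by exists (P * Q'), (Q * P'); rewrite !rmorphM mulf_neq0 // invf_div mulf_div.
Qed.

End FracClosure.

Section FracTransfer.

Variables (A : nzRingType) (F1 F2 : fieldType).
Variables (E1 : {rmorphism A -> F1}) (E2 : {rmorphism A -> F2}).
Hypothesis kerE : forall a, (E1 a == 0) = (E2 a == 0).

Lemma frac_eqE a b : (E1 a == E1 b) = (E2 a == E2 b).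
Proof. by rewrite -subr_eq0 -rmorphB kerE rmorphB subr_eq0. Qed.

Lemma frac_transfer : (forall z, in_frac E1 z) ->
  exists f : F1 -> F2, forall P Q, E1 Q != 0 -> f (E1 P / E1 Q) = E2 P / E2 Q.
Proof.
move=> genF1.
have pairP z : exists PQ : A * A, (E1 PQ.2 != 0) && (z == E1 PQ.1 / E1 PQ.2).
  by have [P [Q [nzQ ->]]] := genF1 z; exists (P, Q); rewrite nzQ eqxx.
exists (fun z => let PQ := xchoose (pairP z) in E2 PQ.1 / E2 PQ.2) => P Q nzQ /=.
case/andP: (xchooseP (pairP (E1 P / E1 Q))); set PQ := xchoose _ => nzQ' eqPQ.
have nz2 a : E1 a != 0 -> E2 a != 0 by rewrite kerE.
apply/esym/eqP; rewrite eqr_div ?nz2 // -!rmorphM -frac_eqE !rmorphM.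
by rewrite -eqr_div // eq_sym.
Qed.

End FracTransfer.

Lemma frac_iso (A : nzRingType) (F1 F2 : fieldType)
    (E1 : {rmorphism A -> F1}) (E2 : {rmorphism A -> F2}) :
  (forall a, (E1 a == 0) = (E2 a == 0)) ->
  (forall z, in_frac E1 z) -> (forall w, in_frac E2 w) ->
  exists sigma : {rmorphism F1 -> F2}, bijective sigma /\ forall a, sigma (E1 a) = E2 a.
Proof.
move=> kerE genF1 genF2.
have [f fE] := frac_transfer kerE genF1.
have [g gE] := frac_transfer (fun a => esym (kerE a)) genF2.
have nz2 a : E1 a != 0 -> E2 a != 0 by rewrite kerE.
have nzQQ Q Q' : E1 Q != 0 -> E1 Q' != 0 -> E1 (Q * Q') != 0.
  by move=> nzQ nzQ'; rewrite rmorphM mulf_neq0.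
have f_rmorph a : f (E1 a) = E2 a.
  by rewrite -[E1 a]divr1 -(rmorph1 E1) fE ?rmorph1 ?divr1 ?oner_eq0.
have fD : {morph f : a b / a + b}.
  move=> a b; have [P [Q [nzQ ->]]] := genF1 a; have [P' [Q' [nzQ' ->]]] := genF1 b.
  rewrite addf_div // -!rmorphM -rmorphD fE ?nzQQ // !fE //.
  by rewrite addf_div ?nz2 // rmorphD !rmorphM.
have fM : {morph f : a b / a * b}.
  move=> a b; have [P [Q [nzQ ->]]] := genF1 a; have [P' [Q' [nzQ' ->]]] := genF1 b.
  by rewrite mulf_div -!rmorphM fE ?nzQQ // !fE // !rmorphM mulf_div.
have f0 : f 0 = 0 by rewrite -(rmorph0 E1) f_rmorph rmorph0.
have f1 : f 1 = 1 by rewrite -(rmorph1 E1) f_rmorph rmorph1.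
pose fN := GRing.isNmodMorphism.Build _ _ f (conj f0 fD).
pose fR := GRing.isMonoidMorphism.Build _ _ f (conj f1 fM).
pose sigma : {rmorphism F1 -> F2} := HB.pack f fN fR.
exists sigma; split=> //; exists g.
- move=> z; have [P [Q [nzQ ->]]] := genF1 z.
  by rewrite /= fE // gE ?nz2.
- move=> w; have [P [Q [nzQ ->]]] := genF2 w.
  by rewrite gE //; apply: fE; rewrite kerE.
Qed.

Section Eval2.

Variables (K F : fieldType) (phi : {rmorphism K -> F}) (x y : F).

Definition eval2_inner : {rmorphism {poly K} -> F} :=
  horner_morph (fun a : K => mulrC x (phi a)).

Definition eval2_rmorph : {rmorphism {poly {poly K}} -> F} :=
  horner_morph (fun c : {poly K} => mulrC y (eval2_inner c)).

Lemma eval2_rmorphE P : eval2_rmorph P = eval2 phi P x y.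
Proof. by []. Qed.

Lemma eval2_rmorph_polyC p : eval2_rmorph p%:P = (map_poly phi p).[x].
Proof. exact: horner_morphC. Qed.

Lemma eval2_rmorphC c : eval2_rmorph c%:P%:P = phi c.
Proof. by rewrite eval2_rmorph_polyC map_polyC hornerC. Qed.

Lemma eval2_rmorphX : eval2_rmorph 'X = y.
Proof. exact: horner_morphX. Qed.

Lemma eval2_rmorph_polyX : eval2_rmorph 'X%:P = x.
Proof. by rewrite eval2_rmorph_polyC map_polyX hornerX. Qed.

Lemma eval2_in_frac (E : {rmorphism {poly {poly K}} -> F}) :
  (forall c, E c%:P%:P = phi c) -> in_frac E x -> in_frac E y ->
  forall P, in_frac E (eval2_rmorph P).
Proof.
move=> EC Ex Ey.
have Eexp w k : in_frac E w -> in_frac E (w ^+ k).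
  move=> Ew; elim: k => [|k IHk]; last by rewrite exprS; apply: in_fracM.
  by rewrite expr0 -(rmorph1 E); apply: in_frac_rmorph.
have E0 : in_frac E 0 by rewrite -(rmorph0 E); apply: in_frac_rmorph.
have Einner c : in_frac E (eval2_inner c).
  rewrite /= /horner_morph horner_coef; apply: (big_ind (in_frac E)) => // [|i _].
    exact: in_fracD.
  apply: in_fracM (Eexp _ _ Ex); rewrite coef_map.
  by have := in_frac_rmorph E (c`_i)%:P%:P; rewrite EC.
move=> P; rewrite /= /horner_morph horner_coef.
apply: (big_ind (in_frac E)) => // [|i _]; first exact: in_fracD.
by apply: in_fracM (Eexp _ _ Ey); rewrite (coef_map eval2_inner); apply: Einner.
Qed.

Lemma frac_generated (E : {rmorphism {poly {poly K}} -> F}) :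
  (forall c, E c%:P%:P = phi c) -> in_frac E x -> in_frac E y ->
  (forall w, in_frac eval2_rmorph w) -> forall w, in_frac E w.
Proof.
move=> EC Ex Ey gen w; have [P [Q [nzQ ->]]] := gen w.
by apply: in_frac_div => //; apply: eval2_in_frac.
Qed.

End Eval2.

Definition transcendental (K F : fieldType) (phi : {rmorphism K -> F}) (x : F) : Prop :=
  forall p : {poly K}, p != 0 -> (map_poly phi p).[x] != 0.

Lemma transcendentalP (K F : fieldType) (phi : {rmorphism K -> F}) (x : F) :
  transcendental phi x <-> ~ algebraicOver phi x.
Proof.
split=> [tr [p nzp /rootP px] | alg p nzp]; first by move/eqP: (tr p nzp).
by apply/eqP => px; apply: alg; exists p => //; apply/rootP.
Qed.

Lemma transcendentalV (K F : fieldType) (phi : {rmorphism K -> F}) (x : F) :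
  transcendental phi x -> transcendental phi x^-1.
Proof.
by move=> /transcendentalP tr; apply/transcendentalP => /algebraic_inv; rewrite invrK.
Qed.

Lemma integral_of_expn (R A : comNzRingType) (RtoA : {rmorphism R -> A})
    (d : nat) (x : A) :
  (0 < d)%N -> integralOver RtoA (x ^+ d) -> integralOver RtoA x.
Proof.
move=> d_gt0 intxd; apply: (@integral_root_monic _ _ _ _ ('X^d - (x ^+ d)%:P)).
- exact: monicXnsubC.
- by rewrite rootE !hornerE subrr.
move=> _ /(nthP 0)[i _ <-]; rewrite coefB coefXn coefC.
apply: integral_sub; first exact: integral_nat.
by case: (i == 0)%N; [exact: intxd | exact: integral0].
Qed.

Lemma transcendental_of_expn_horner (K F : fieldType) (phi : {rmorphism K -> F})
    (x y : F) (d : nat) (T : {poly K}) :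
  (0 < d)%N -> transcendental phi x -> x ^+ d = (map_poly phi T).[y] ->
  transcendental phi y.
Proof.
move=> d_gt0 /transcendentalP trx xdE; apply/transcendentalP => /integral_algebraic inty.
apply/trx/integral_algebraic/(integral_of_expn d_gt0); rewrite xdE.
apply: integral_horner inty => _ /(nthP 0)[i _ <-].
by rewrite coef_map; apply: integral_id.
Qed.

Lemma divpXK (K : fieldType) (p : {poly K}) : p.[0] = 0 -> p %/ 'X * 'X = p.
Proof. by move=> p0; rewrite divpK // -['X]subr0 -polyC0 dvdp_XsubCl /root p0. Qed.

Section Eisenstein.

Variables (K F : fieldType) (h : {rmorphism {poly K} -> F}).
Hypothesis h_inj : forall p, p != 0 -> h p != 0.
Variables (u : {poly K}) (e : nat) (z : F).
Hypotheses (u0 : u.[0] != 0) (zE : z ^+ e.+1 = h ('X * u)).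

Definition zsum (c : nat -> {poly K}) := \sum_(i < e.+1) h (c i) * z ^+ i.

Definition zshift (c : nat -> {poly K}) (i : nat) :=
  if i is i'.+1 then c i' else 'X * u * c e.

Lemma zsum_shift c : zsum (zshift c) = z * zsum c.
Proof.
rewrite /zsum big_ord_recl [in RHS]big_ord_recr /= mulrDr mulr_sumr addrC.
congr (_ + _); first by apply: eq_bigr => i _; rewrite exprS; ring.
by rewrite rmorphM -zE exprS; ring.
Qed.

Lemma zsum_iter_shift c k : zsum (iter k zshift c) = z ^+ k * zsum c.
Proof. by elim: k => [|k IHk] /=; rewrite ?mul1r // zsum_shift IHk exprS mulrA. Qed.

Lemma iter_zshift_horner0 c k i :
  (iter k zshift c i).[0] = if (k <= i)%N then (c (i - k)%N).[0] else 0.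
Proof.
elim: k i => [|k IHk] [|i] //=; rewrite ?subn0 // ?IHk.
by rewrite !hornerM hornerX !mul0r.
Qed.

(* Column k of A holds the coordinates of z^k * zsum c, so (z^i)_i lies in the
   left kernel of A mapped by h; hence det A = 0, while modulo t the matrix A
   is triangular with diagonal c_0(0). *)
Lemma zsum_eq0_root0 c : zsum c = 0 -> (c 0%N).[0] = 0.
Proof.
move=> zc.
pose A : 'M[{poly K}]_e.+1 := \matrix_(i, k) iter k zshift c i.
have detA : \det A = 0.
  apply/eqP; apply: (contraTT (@h_inj _)); rewrite -det_map_mx.
  apply/det0P; exists (\row_i z ^+ i).
    by apply/eqP => /matrixP /(_ 0 0); rewrite !mxE expr0 => /eqP; rewrite oner_eq0.
  apply/matrixP => i k; rewrite !mxE.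
  transitivity (zsum (iter k zshift c)); last by rewrite zsum_iter_shift zc mulr0.
  by apply: eq_bigr => j _; rewrite !mxE mulrC.
have : \det (map_mx (horner_eval 0) A) = 0 by rewrite det_map_mx detA rmorph0.
rewrite det_trig; last first.
  by apply/is_trig_mxP => i j ij; rewrite !mxE horner_evalE iter_zshift_horner0 leqNgt ij.
under eq_bigr => i _ do rewrite !mxE horner_evalE iter_zshift_horner0 leqnn subnn.
by rewrite prodr_const card_ord => /eqP; rewrite expf_eq0 => /andP[_ /eqP].
Qed.

Lemma z_neq0 : z != 0.
Proof.
have u_neq0 : u != 0 by apply: contraNneq u0 => ->; rewrite horner0.
have /h_inj : 'X * u != 0 by rewrite mulf_neq0 ?polyX_eq0.
by rewrite -zE expf_eq0 andbC => /norP[].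
Qed.

(* When c_0(0) = 0, zsum (zrot c) is u(t) zsum c / z, reduced with z^e.+1 = t u(t). *)
Definition zrot (c : nat -> {poly K}) (i : nat) :=
  if (i < e)%N then u * c i.+1 else c 0%N %/ 'X.

Lemma zsum_rot c : (c 0%N).[0] = 0 -> z * zsum (zrot c) = h u * zsum c.
Proof.
move=> c0; rewrite /zsum big_ord_recr [in RHS]big_ord_recl /= /zrot ltnn.
rewrite !mulrDr !mulr_sumr addrC; congr (_ + _).
  by rewrite -{2}(divpXK c0) expr0 mulr1 mulrCA -exprS zE !rmorphM; ring.
by apply: eq_bigr => i _; rewrite ltn_ord exprS !rmorphM; ring.
Qed.

Lemma zsum_eq0_root c k : zsum c = 0 -> (k <= e)%N -> (c k).[0] = 0.
Proof.
elim: k c => [|k IHk] c zc ke; first exact: zsum_eq0_root0.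
have c0 := zsum_eq0_root0 zc.
have /eqP : z * zsum (zrot c) = 0 by rewrite zsum_rot // zc mulr0.
rewrite mulf_eq0 (negbTE z_neq0) => /eqP /IHk /(_ (ltnW ke)).
by rewrite /zrot ke hornerM => /eqP; rewrite mulf_eq0 (negbTE u0) => /eqP.
Qed.

Lemma zsum_eq0 c : zsum c = 0 -> forall i, (i <= e)%N -> c i = 0.
Proof.
suff bound N : (forall i, (i <= e)%N -> (size (c i) <= N)%N) -> zsum c = 0 ->
    forall i, (i <= e)%N -> c i = 0.
  apply: (bound (\max_(i < e.+1) size (c i))) => i ie.
  exact: (@leq_bigmax _ (fun j : 'I_e.+1 => size (c j)) (Ordinal (ie : (i < e.+1)%N))).
elim: N c => [|N IHN] c sc zc i ie.
  by apply/eqP; rewrite -size_poly_eq0 -leqn0 sc.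
pose c' j := c j %/ 'X.
have cE j : (j <= e)%N -> c j = c' j * 'X.
  by move=> je; rewrite divpXK // (zsum_eq0_root zc je).
have zc' : zsum c' = 0.
  have : zsum c = h 'X * zsum c'.
    rewrite /zsum mulr_sumr; apply: eq_bigr => j _.
    by rewrite (cE j (ltn_ord j)) rmorphM mulrCA mulrA.
  have hX : h 'X != 0 by apply: h_inj; rewrite polyX_eq0.
  by rewrite zc => /esym/eqP; rewrite mulf_eq0 (negbTE hX) => /eqP.
have sc' j : (j <= e)%N -> (size (c' j) <= N)%N.
  move=> je; have [->|nz] := eqVneq (c' j) 0; first by rewrite size_poly0.
  by rewrite -ltnS -size_mulX // -cE // sc.
by rewrite cE // (IHN c' sc' zc' i ie) mul0r.
Qed.

Lemma eval_eq0_eisenstein (P : {poly {poly K}}) :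
  ((map_poly h P).[z] == 0) = Pdiv.Ring.rdvdp ('X^(e.+1) - ('X * u)%:P) P.
Proof.
set f := 'X^(e.+1) - _; have mf : f \is monic by apply: monicXnsubC.
set R := Pdiv.Ring.rmodp P f.
have hf : (map_poly h f).[z] = 0.
  by rewrite rmorphB /= map_polyXn map_polyC !hornerE zE subrr.
have -> : (map_poly h P).[z] = (map_poly h R).[z].
  by rewrite {1}(Pdiv.RingMonic.rdivp_eq mf P) rmorphD rmorphM /= !hornerE hf mulr0 add0r.
have sR : (size R <= e.+1)%N.
  by rewrite -ltnS -(size_XnsubC ('X * u) (ltn0Sn e)) Pdiv.Ring.ltn_rmodpN0 // monic_neq0.
rewrite /Pdiv.Ring.rdvdp -/R; apply/eqP/eqP => [hR|->]; last by rewrite rmorph0 horner0.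
have zR : zsum (fun i => R`_i) = 0.
  rewrite -hR (horner_coef_wide _ (leq_trans (size_poly _ _) sR)).
  by apply: eq_bigr => i _; rewrite coef_map.
apply/polyP => i; rewrite coef0.
have [ie|ei] := leqP i e; first exact: zsum_eq0 zR i ie.
by rewrite nth_default // (leq_trans sR ei).
Qed.

End Eisenstein.

Definition eisenstein_model (K F : fieldType) (phi : {rmorphism K -> F})
    (u : {poly K}) (N : nat) (t z : F) : Prop :=
  [/\ transcendental phi t, z ^+ N = (map_poly phi ('X * u)).[t] &
      forall w, in_frac (eval2_rmorph phi t z) w].

Lemma K_isomorphic_eisenstein (K F1 F2 : fieldType)
    (phi1 : {rmorphism K -> F1}) (phi2 : {rmorphism K -> F2})
    (u : {poly K}) (N : nat) (t1 z1 : F1) (t2 z2 : F2) :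
  (0 < N)%N -> u.[0] != 0 ->
  eisenstein_model phi1 u N t1 z1 -> eisenstein_model phi2 u N t2 z2 ->
  K_isomorphic phi1 phi2.
Proof.
case: N => // e _ u0 [tr1 zE1 gen1] [tr2 zE2 gen2].
have kerE P : (eval2_rmorph phi1 t1 z1 P == 0) = (eval2_rmorph phi2 t2 z2 P == 0).
  rewrite (eval_eq0_eisenstein (h := eval2_inner phi1 t1) tr1 u0 zE1).
  by rewrite (eval_eq0_eisenstein (h := eval2_inner phi2 t2) tr2 u0 zE2).
have [sigma [sigma_bij sigmaE]] := frac_iso kerE gen1 gen2.
by exists sigma; split=> // c; rewrite -(eval2_rmorphC phi1 t1 z1) sigmaE eval2_rmorphC.
Qed.

Lemma sym_q1E (R : nzRingType) (q n : nat) :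
  sym_q R q n 1 = \sum_(j < n) 'X^(q ^ j).
Proof.
rewrite /sym_q (eq_bigl (mem [set [set j] | j : 'I_n])); last first.
  by move=> S; apply/cards1P/imsetP => [[j ->] | [j _ ->]]; exists j.
rewrite big_imset /=; last by move=> i j _ _ /set1_inj.
by apply: eq_bigr => j _; rewrite big_set1.
Qed.

Lemma sym_q_predE (R : nzRingType) (q n : nat) : (0 < n)%N ->
  sym_q R q n n.-1 = \sum_(j < n) 'X^(\sum_(i < n) q ^ i - q ^ j).
Proof.
move=> n_gt0; rewrite /sym_q (eq_bigl (mem [set [set~ j] | j : 'I_n])); last first.
  move=> S; apply/idP/imsetP => [/eqP cardS | [j _ ->]]; last by rewrite cardsC1 card_ord.
  have /cards1P[j Sj] : #|~: S| == 1%N.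
    by rewrite cardsCs setCK card_ord cardS -subn1 subKn.
  by exists j; rewrite // -Sj setCK.
rewrite big_imset /=; last by move=> i j _ _ /setC_inj/set1_inj.
apply: eq_bigr => j _; congr 'X^_.
by rewrite [in RHS](bigD1 j) //= addKn; apply: eq_bigl => i; rewrite in_setC1.
Qed.

Lemma kummer_exponentE (q n : nat) : (1 < q)%N ->
  ((q ^ n - 1) %/ (q - 1) = \sum_(j < n) q ^ j)%N.
Proof. by move=> q_gt1; rewrite subn1 predn_exp subn1 mulKn // -subn1 subn_gt0. Qed.

Lemma horner_map_sumXn (K F : fieldType) (phi : {rmorphism K -> F}) (x : F)
    (n : nat) (g : 'I_n -> nat) :
  (map_poly phi (\sum_(j < n) 'X^(g j))).[x] = \sum_(j < n) x ^+ g j.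
Proof.
by rewrite rmorph_sum horner_sum; apply: eq_bigr => j _; rewrite /= map_polyXn hornerXn.
Qed.

Lemma eval2_kummer (K F : fieldType) (phi : {rmorphism K -> F})
    (q n i : nat) (x y : F) :
  eval2 phi (kummer_poly K q n i) x y =
  y ^+ ((q ^ n - 1) %/ (q - 1)) - (map_poly phi (sym_q K q n i)).[x].
Proof.
by rewrite -eval2_rmorphE rmorphB rmorphXn /= eval2_rmorphX eval2_rmorph_polyC.
Qed.

Lemma eval2_trace_norm (K F : fieldType) (phi : {rmorphism K -> F})
    (q n : nat) (x y : F) :
  eval2 phi (trace_norm_poly K q n) x y =
  (map_poly phi (sym_q K q n 1)).[y] - x ^+ (\sum_(j < n) q ^ j).
Proof.
rewrite -eval2_rmorphE rmorphB rmorph_sum /= eval2_rmorph_polyC sym_q1E.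
rewrite map_polyXn hornerXn horner_map_sumXn.
by congr (_ - _); apply: eq_bigr => j _; rewrite rmorphXn /= eval2_rmorphX.
Qed.

Definition trace_cofactor (R : nzRingType) (q n : nat) : {poly R} :=
  \sum_(j < n) 'X^((q ^ j).-1).

Lemma sym_q1_cofactor (R : nzRingType) (q n : nat) : (0 < q)%N ->
  sym_q R q n 1 = 'X * trace_cofactor R q n.
Proof.
move=> q_gt0; rewrite sym_q1E mulr_sumr; apply: eq_bigr => j _.
by rewrite -exprS prednK // expn_gt0 q_gt0.
Qed.

Lemma horner0_trace_cofactor (R : nzRingType) (q n : nat) : (1 < q)%N -> (0 < n)%N ->
  (trace_cofactor R q n).[0] = 1.
Proof.
case: n => // n q_gt1 _; rewrite horner_sum big_ord_recl big1 ?addr0 => [|j _].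
  by rewrite hornerXn expn0 expr0.
have q_gt1' : (1 < q ^ lift ord0 j)%N.
  exact: leq_trans q_gt1 (leq_pexp2l (ltnW q_gt1) (ltn0Sn j)).
by rewrite hornerXn expr0n -subn1 subn_eq0 leqNgt q_gt1'.
Qed.

Lemma sum_expn_gt0 (q n : nat) : (0 < n)%N -> (0 < \sum_(j < n) q ^ j)%N.
Proof. by move=> n_gt0; rewrite (bigD1 (Ordinal n_gt0)) //= expn0. Qed.

Section TraceModels.

Variables (K F : fieldType) (phi : {rmorphism K -> F}) (q n : nat) (x y : F).
Hypotheses (q_gt1 : (1 < q)%N) (n_gt0 : (0 < n)%N).

Let q_gt0 : (0 < q)%N := ltnW q_gt1.

Local Notation D := (\sum_(j < n) q ^ j)%N.
Local Notation u := (trace_cofactor K q n).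

Lemma kummer1_model :
  is_function_field phi (kummer_poly K q n 1) x y -> eisenstein_model phi u D x y.
Proof.
case=> tr ev gen; split=> //; move/eqP: ev.
by rewrite eval2_kummer kummer_exponentE // subr_eq0 sym_q1_cofactor ?q_gt0 // => /eqP.
Qed.

Lemma kummer_pred_model :
  is_function_field phi (kummer_poly K q n n.-1) x y ->
  eisenstein_model phi u D x^-1 (y / x).
Proof.
case=> tr ev gen.
have x_neq0 : x != 0 by have := tr 'X; rewrite map_polyX hornerX polyX_eq0; apply.
split; first exact: transcendentalV.
  move/eqP: ev; rewrite eval2_kummer kummer_exponentE // subr_eq0 sym_q_predE //.
  rewrite horner_map_sumXn => /eqP yD.
  rewrite -sym_q1_cofactor ?q_gt0 // sym_q1E horner_map_sumXn expr_div_n yD mulr_suml.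
  apply: eq_bigr => j _; rewrite exprB ?unitfE //; last by rewrite (bigD1 j) //= leq_addr.
  by rewrite mulrAC divff ?expf_neq0 // div1r exprVn.
apply: (frac_generated (x := x) (y := y) (eval2_rmorphC _ _ _)) gen.
  by exists 1, 'X%:P; rewrite rmorph1 eval2_rmorph_polyX invr_eq0 div1r invrK.
by exists 'X, 'X%:P; rewrite eval2_rmorphX eval2_rmorph_polyX invr_eq0 invrK mulfVK.
Qed.

Lemma trace_norm_model :
  is_function_field phi (trace_norm_poly K q n) x y -> eisenstein_model phi u D y x.
Proof.
case=> tr ev gen; move/eqP: ev.
rewrite eval2_trace_norm subr_eq0 sym_q1_cofactor ?q_gt0 // => /eqP /esym xD.
split=> //; first exact: transcendental_of_expn_horner (sum_expn_gt0 q n_gt0) tr xD.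
apply: (frac_generated (x := x) (y := y) (eval2_rmorphC _ _ _)) gen.
  by have := in_frac_rmorph (eval2_rmorph phi y x) 'X; rewrite eval2_rmorphX.
by have := in_frac_rmorph (eval2_rmorph phi y x) 'X%:P; rewrite eval2_rmorph_polyX.
Qed.

End TraceModels.

Theorem corollary4p27 (p m n : nat) (K : finFieldType) :
  prime p -> (0 < m)%N -> (2 <= n)%N -> #|K| = ((p ^ m) ^ n)%N ->
  forall (F1 F2 : fieldType) (phi1 : {rmorphism K -> F1}) (phi2 : {rmorphism K -> F2})
         (x1 y1 : F1) (x2 y2 : F2),
    is_function_field phi2 (trace_norm_poly K (p ^ m) n) x2 y2 ->
    (is_function_field phi1 (kummer_poly K (p ^ m) n 1) x1 y1 ->
       K_isomorphic phi1 phi2) /\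
    (is_function_field phi1 (kummer_poly K (p ^ m) n n.-1) x1 y1 ->
       K_isomorphic phi1 phi2).
Proof.
move=> p_prime m_gt0 n_ge2 _ F1 F2 phi1 phi2 x1 y1 x2 y2 /trace_norm_model model2.
have q_gt1 : (1 < p ^ m)%N by rewrite -(expn0 p) ltn_exp2l // prime_gt1.
have n_gt0 : (0 < n)%N := ltnW n_ge2.
have iso := K_isomorphic_eisenstein (sum_expn_gt0 (p ^ m) n_gt0).
have u0 : (trace_cofactor K (p ^ m) n).[0] != 0 by rewrite horner0_trace_cofactor ?oner_neq0.
split=> [/kummer1_model | /kummer_pred_model] model1.
- exact: iso u0 (model1 q_gt1) (model2 q_gt1 n_gt0).
- exact: iso u0 (model1 q_gt1 n_gt0) (model2 q_gt1 n_gt0).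
Qed.
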